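(* Let $A\subset\mathbb{R}^n$ be a set-germ at $0$ with $0\in\overline{A}$, and let $h:(\mathbb{R}^n,0)\to(\mathbb{R}^n,0)$ be a bi-Lipschitz homeomorphism (germ). Then $D(h(A))\subset D(h(LD(A)))$. Moreover, if $A$ satisfies condition $(SSP)$, then $D(h(A))=D(h(LD(A)))$.
   Context: A bi-Lipschitz homeomorphism germ is a homeomorphism between neighbourhoods of $0$ fixing $0$ with $K_1|x-y|\le|h(x)-h(y)|\le K_2|x-y|$ for some $0<K_1\le K_2$ near $0$. Direction set: $D(X)=\{a\in S^{n-1} : \exists\, \{x_i\}\subset X\setminus\{0\},\ x_i\to 0,\ x_i/\|x_i\|\to a\}$; $LD(A)=\{ta : a\in D(A),\ t\ge0\}$. A set-germ $X$ with $0\in\overline{X}$ satisfies condition $(SSP)$ if for every sequence $\{a_m\}\subset\mathbb{R}^n$ with $a_m\to0$ and $\lim a_m/\|a_m\|\in D(X)$ there is a sequence $\{b_m\}\subset X$ with $\|a_m-b_m\|/\|a_m\|\to0$ and $\|a_m-b_m\|/\|b_m\|\to0$. *)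

(* points of R^n are row vectors 'rV[R]_n, R : realType. *)
From HB Require Import structures.
From mathcomp Require Import all_boot all_order all_algebra.
From mathcomp Require Import all_classical all_reals all_analysis.
Set Implicit Arguments. Unset Strict Implicit. Unset Printing Implicit Defensive.
Import Order.TTheory GRing.Theory Num.Theory.
Import numFieldNormedType.Exports.
Local Open Scope classical_set_scope.
Local Open Scope ring_scope.

Definition enorm {R : realType} {n : nat} (x : 'rV[R]_n) : R :=
  Num.sqrt (\sum_(i < n) (x ord0 i) ^+ 2).

(* Direction set D(X) (unit sphere for the Euclidean norm). Convergence uses the
   canonical topology of 'rV[R]_n, which is the Euclidean topology. *)
Definition dirset {R : realType} {n : nat} (X : set 'rV[R]_n) : set 'rV[R]_n :=
  [set a | enorm a = 1 /\
    exists u : nat -> 'rV[R]_n,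
      (forall i, X (u i) /\ u i != 0) /\
      u @ \oo --> (0 : 'rV[R]_n) /\
      (fun i => (enorm (u i))^-1 *: u i) @ \oo --> a].

Definition LD {R : realType} {n : nat} (A : set 'rV[R]_n) : set 'rV[R]_n :=
  [set x | exists t a, 0 <= t /\ dirset A a /\ x = t *: a].

Definition SSP {R : realType} {n : nat} (X : set 'rV[R]_n) : Prop :=
  forall a : nat -> 'rV[R]_n,
    (forall m, a m != 0) ->
    a @ \oo --> (0 : 'rV[R]_n) ->
    (exists l, dirset X l /\ (fun m => (enorm (a m))^-1 *: a m) @ \oo --> l) ->
    exists b : nat -> 'rV[R]_n,
      (forall m, X (b m)) /\
      (fun m => enorm (a m - b m) / enorm (a m)) @ \oo --> (0 : R) /\
      (fun m => enorm (a m - b m) / enorm (b m)) @ \oo --> (0 : R).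

Definition bilip_homeo_germ {R : realType} {n : nat}
    (h : 'rV[R]_n -> 'rV[R]_n) (U : set 'rV[R]_n) : Prop :=
  [/\ open U, U 0, h 0 = 0, open (h @` U) &
   [/\ (forall x y, U x -> U y -> h x = h y -> x = y),
       {within U, continuous h},
       (exists g : 'rV[R]_n -> 'rV[R]_n,
          (forall x, U x -> g (h x) = x) /\ {within h @` U, continuous g}) &
       (exists r K1 K2 : R, [/\ 0 < r, 0 < K1, K1 <= K2,
          (forall x, enorm x < r -> U x) &
          (forall x y, enorm x < r -> enorm y < r ->
             K1 * enorm (x - y) <= enorm (h x - h y) /\
             enorm (h x - h y) <= K2 * enorm (x - y))])]].

(* Let a be a direction of h(A), realised by h(x_i) with x_i in A, x_i -> 0.
   After extracting a subsequence, x_i/|x_i| -> d in D(A), so y_i = |x_i| d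
   lies in LD(A) and |x_i - y_i| = o(|x_i|).  A bi-Lipschitz germ preserves
   this relation, |h x_i - h y_i| = o(|h x_i|), and two sequences related in
   this way have the same limiting direction; hence a is a direction of
   h(LD(A)).  Conversely, the directions of points of LD(A) lie in D(A), which
   is closed, so a sequence x_i in LD(A) has a subsequence with directions
   converging to some d in D(A); (SSP) then provides b_i in A with
   |x_i - b_i| = o(|x_i|), and the same argument applies. *)

From HB Require Import structures.
From mathcomp Require Import all_boot all_order all_algebra.
From mathcomp Require Import all_classical all_reals all_analysis.
From mathcomp Require Import ring lra.
Import Order.TTheory GRing.Theory Num.Theory.
Import numFieldNormedType.Exports.
Local Open Scope classical_set_scope.
Local Open Scope ring_scope.
Set Implicit Arguments. Unset Strict Implicit. Unset Printing Implicit Defensive.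

Section euclidean_norm.
Variables (R : realType) (n : nat).
Implicit Types (x y : 'rV[R]_n) (c : R).

Lemma enorm_ge0 x : 0 <= enorm x.
Proof. exact: sqrtr_ge0. Qed.

Lemma enorm_sqr x : enorm x ^+ 2 = \sum_(i < n) x ord0 i ^+ 2.
Proof. by rewrite sqr_sqrtr // sumr_ge0 // => i _; rewrite sqr_ge0. Qed.

Lemma enormZ c x : enorm (c *: x) = `|c| * enorm x.
Proof.
rewrite /enorm (eq_bigr (fun i => c ^+ 2 * x ord0 i ^+ 2)) => [|i _].
  by rewrite -mulr_sumr sqrtrM ?sqr_ge0 // sqrtr_sqr.
by rewrite mxE exprMn.
Qed.

Lemma enorm0 : enorm (0 : 'rV[R]_n) = 0.
Proof. by rewrite -(scale0r 0) enormZ normr0 mul0r. Qed.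

Lemma enorm_distC x y : enorm (x - y) = enorm (y - x).
Proof. by rewrite -opprB -scaleN1r enormZ normrN1 mul1r. Qed.

Lemma ler_coord_enorm x i : `|x ord0 i| <= enorm x.
Proof.
rewrite -ler_sqr ?nnegrE ?enorm_ge0 // real_normK ?num_real // enorm_sqr (bigD1 i) //=.
by rewrite lerDl sumr_ge0 // => j _; rewrite sqr_ge0.
Qed.

Lemma enorm_eq0 x : (enorm x == 0) = (x == 0).
Proof.
apply/eqP/eqP => [x0|->]; last exact: enorm0.
apply/rowP => i; rewrite mxE; apply/normr0_eq0/eqP.
by rewrite eq_le normr_ge0 -x0 ler_coord_enorm.
Qed.

Lemma enorm_gt0 x : (0 < enorm x) = (x != 0).
Proof. by rewrite lt_def enorm_eq0 enorm_ge0 andbT. Qed.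

Lemma ler_mxnorm_enorm x : `|x| <= enorm x.
Proof.
change (mx_norm x <= enorm x); rewrite mx_normrE; apply/bigmax_leP; split => [|[i j] _].
  exact: enorm_ge0.
by rewrite /= (ord1 i) ler_coord_enorm.
Qed.

Lemma ler_enorm_mxnorm x : enorm x <= Num.sqrt n%:R * `|x|.
Proof.
rewrite -[X in _ * X]normr_id -sqrtr_sqr -sqrtrM // mulr_natl.
rewrite -[X in _ *+ X]card_ord -sumr_const.
rewrite /enorm ler_sqrt; last by rewrite sumr_ge0 // => i _; rewrite sqr_ge0.
apply: ler_sum => i _.
rewrite -real_normK ?num_real // ler_sqr ?nnegrE //.
change (`|x ord0 i| <= mx_norm x); rewrite mx_normrE.
exact: (le_bigmax _ (fun ij : 'I_1 * 'I_n => `|x ij.1 ij.2|) (ord0, i)).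
Qed.

Lemma enorm_cauchy_schwarz x y :
  \sum_(i < n) x ord0 i * y ord0 i <= enorm x * enorm y.
Proof.
have [-> | x0] := eqVneq x 0.
  by rewrite enorm0 mul0r big1 // => i _; rewrite mxE mul0r.
have [-> | y0] := eqVneq y 0.
  by rewrite enorm0 mulr0 big1 // => i _; rewrite mxE mulr0.
set a := enorm x; set b := enorm y.
have a_gt0 : 0 < a by rewrite enorm_gt0.
have b_gt0 : 0 < b by rewrite enorm_gt0.
have ab_gt0 : 0 < a * b by rewrite mulr_gt0.
(* AM-GM termwise: [2 a b x_i y_i <= b^2 x_i^2 + a^2 y_i^2]. *)
have amgm : (a * b) * (2 * \sum_(i < n) x ord0 i * y ord0 i) <= 2 * (a * b) ^+ 2.
  rewrite 2!mulr_sumr.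
  apply: (@le_trans _ _ (\sum_(i < n) (b ^+ 2 * x ord0 i ^+ 2 + a ^+ 2 * y ord0 i ^+ 2))).
    apply: ler_sum => i _; have := sqr_ge0 (b * x ord0 i - a * y ord0 i); nra.
  by rewrite big_split /= -!mulr_sumr -!enorm_sqr -/a -/b; lra.
nra.
Qed.

Lemma enormD x y : enorm (x + y) <= enorm x + enorm y.
Proof.
rewrite -ler_sqr ?nnegrE ?addr_ge0 ?enorm_ge0 // enorm_sqr.
under eq_bigr do rewrite mxE sqrrD.
rewrite 2!big_split /= -!enorm_sqr sumrMnl.
have := enorm_cauchy_schwarz x y; nra.
Qed.

Lemma ler_enorm_dist x y : `|enorm x - enorm y| <= enorm (x - y).
Proof.
have := enormD (x - y) y; have := enormD (y - x) x.
rewrite !subrK enorm_distC ler_norml; lra.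
Qed.

End euclidean_norm.

Section euclidean_topology.
Variables (R : realType) (n : nat).

Lemma enorm_cvgP {T} {F : set_system T} {FF : Filter F}
    (f : T -> 'rV[R]_n) (l : 'rV[R]_n) :
  f @ F --> l <-> forall e, 0 < e -> \forall t \near F, enorm (f t - l) < e.
Proof.
rewrite cvgrPdist_lt; split => fl e e_gt0.
  have c_gt0 : 0 < Num.sqrt n%:R + 1 :> R by rewrite ltr_wpDl ?sqrtr_ge0.
  apply: filterS (fl _ (divr_gt0 e_gt0 c_gt0)) => t.
  rewrite distrC ltr_pdivlMr // => flt.
  apply: le_lt_trans (ler_enorm_mxnorm _) _.
  have := normr_ge0 (f t - l); have := sqrtr_ge0 (n%:R : R); nra.
apply: filterS (fl e e_gt0) => t; rewrite distrC.
exact: le_lt_trans (ler_mxnorm_enorm _).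
Qed.

Lemma enorm_cvg0P {T} {F : set_system T} {FF : Filter F} (f : T -> 'rV[R]_n) :
  f @ F --> (0 : 'rV[R]_n) <-> forall e, 0 < e -> \forall t \near F, enorm (f t) < e.
Proof.
rewrite enorm_cvgP; split => f0 e /f0; apply: filterS => t; by rewrite subr0.
Qed.

Lemma near_enorm_lt (x : 'rV[R]_n) e : 0 < e -> \forall y \near x, enorm (y - x) < e.
Proof. exact: (@enorm_cvgP _ (nbhs x) (nbhs_filter x) id x).1 cvg_id e. Qed.

Lemma continuous_enorm : continuous (@enorm R n).
Proof.
move=> x; apply/(@cvgrPdist_lt _ _ _ (nbhs x) (nbhs_filter x)) => e e_gt0.
apply: filterS (near_enorm_lt x e_gt0) => y; rewrite enorm_distC.
exact: le_lt_trans (ler_enorm_dist _ _).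
Qed.

Lemma closed_sphere : closed [set x : 'rV[R]_n | enorm x = 1].
Proof.
apply: (@preimage_closed _ _ (@enorm R n) [set 1]); last exact: closed_eq.
by move=> x _; exact: continuous_enorm.
Qed.

Lemma compact_sphere : compact [set x : 'rV[R]_n | enorm x = 1].
Proof.
apply: bounded_closed_compact closed_sphere.
exists 1; split => // M M_gt1 x /= x1.
by rewrite (le_trans (ler_mxnorm_enorm x)) // x1 ltW.
Qed.

End euclidean_topology.

Lemma compact_cvg_subseq {R : realType} {T : pseudoMetricType R} (K : set T)
    (u : nat -> T) :
  compact K -> (forall i, K (u i)) ->
  exists2 l, K l & exists2 phi : nat -> nat, phi @ \oo --> \oo & u \o phi @ \oo --> l.
Proof.
move=> cK Ku.
have [l [Kl ul]] : K `&` cluster (u @ \oo) !=set0.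
  by apply: cK; exists 0%N => // i _; exact: Ku.
have pick k : exists i, (k <= i)%N /\ ball l k.+1%:R^-1 (u i).
  have tail : (u @ \oo) [set u i | i in [set i | (k <= i)%N]].
    by exists k => // i ki; exists i.
  have lball : nbhs l (ball l k.+1%:R^-1) by apply: nbhsx_ballx; rewrite invr_gt0.
  by have [_ [[i ki <-] lui]] := ul _ _ tail lball; exists i.
have [phi phiP] := choice pick.
exists l => //; exists phi.
  move=> P [N _ NP]; exists N => // k Nk.
  apply: NP; rewrite /= (leq_trans Nk) //; by case: (phiP k).
apply/cvg_ballP => e e_gt0; near=> k.
apply: le_ball (proj2 (phiP k)); apply: ltW.
by near: k; exact: (near_infty_natSinv_lt (PosNum e_gt0)).
Unshelve. all: by end_near.
Qed.

Section directions.
Variables (R : realType) (n : nat).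
Implicit Types (x y a : 'rV[R]_n) (X : set 'rV[R]_n).

(* [dir 0 = 0], since [0^-1 = 0]. *)
Definition dir x := (enorm x)^-1 *: x.

Lemma enorm_scale_dir x : enorm x *: dir x = x.
Proof.
have [->|x0] := eqVneq x 0; first by rewrite enorm0 scale0r.
by rewrite /dir scalerA mulfV ?scale1r // enorm_eq0.
Qed.

Lemma enorm_dir x : x != 0 -> enorm (dir x) = 1.
Proof.
rewrite -enorm_gt0 => x_gt0.
by rewrite /dir enormZ gtr0_norm ?invr_gt0 // mulVf // gt_eqF.
Qed.

Lemma enorm_dir_le1 x : enorm (dir x) <= 1.
Proof.
have [->|/enorm_dir -> //] := eqVneq x 0.
by rewrite /dir enorm0 invr0 scale0r enorm0.
Qed.

Lemma dirZ (c : R) x : 0 < c -> dir (c *: x) = dir x.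
Proof.
move=> c_gt0; rewrite /dir enormZ gtr0_norm // invfM scalerA mulrAC.
by rewrite mulVf ?gt_eqF // mul1r.
Qed.

Lemma dir_id a : enorm a = 1 -> dir a = a.
Proof. by move=> a1; rewrite /dir a1 invr1 scale1r. Qed.

Lemma ler_enorm_dir_dist x y : enorm x * enorm (dir y - dir x) <= 2 * enorm (y - x).
Proof.
have decomp : enorm x *: (dir y - dir x) = (enorm x - enorm y) *: dir y + (y - x).
  by rewrite scalerBl scalerBr !enorm_scale_dir addrA subrK.
rewrite -(ger0_norm (enorm_ge0 x)) -enormZ decomp.
apply: le_trans (enormD _ _) _; rewrite enormZ.
have := enorm_dir_le1 y; have := ler_enorm_dist x y; rewrite enorm_distC.
have := normr_ge0 (enorm x - enorm y); nra.
Qed.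

Lemma dirsetP X a : dirset X a <->
  enorm a = 1 /\ forall e, 0 < e ->
    exists w, [/\ X w, w != 0, enorm w < e & enorm (dir w - a) < e].
Proof.
split=> [[a1 [u [Xu [/enorm_cvg0P u0 /enorm_cvgP ua]]]] | [a1 aP]].
  split => // e e_gt0; near \oo => i.
  have [Xui ui0] := Xu i; exists (u i); split => //; near: i; [exact: u0 | exact: ua].
have /choice[w wP] : forall k : nat, exists w,
    [/\ X w, w != 0, enorm w < k.+1%:R^-1 & enorm (dir w - a) < k.+1%:R^-1].
  by move=> k; apply: aP; rewrite invr_gt0.
split => //; exists w; split; first by move=> k; case: (wP k).
have near_inv (e : R) : 0 < e -> \forall k \near \oo, k.+1%:R^-1 < e.
  by move=> e_gt0; exact: (near_infty_natSinv_lt (PosNum e_gt0)).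
split; [apply/enorm_cvg0P | apply/enorm_cvgP] => e /near_inv;
  apply: filterS => k; have [_ _ wk dwk] := wP k; exact: lt_trans.
Unshelve. all: by end_near.
Qed.

Lemma dirset_near X a (u : nat -> 'rV[R]_n) : enorm a = 1 ->
  (\forall i \near \oo, X (u i) /\ u i != 0) -> u @ \oo --> (0 : 'rV[R]_n) ->
  dir \o u @ \oo --> a -> dirset X a.
Proof.
move=> a1 Xu /enorm_cvg0P u0 /enorm_cvgP ua; apply/dirsetP; split => // e e_gt0.
near \oo => i.
have [Xui ui0] : X (u i) /\ u i != 0 by near: i.
exists (u i); split => //; near: i; [exact: u0 | exact: ua].
Unshelve. all: by end_near.
Qed.

Lemma closed_dirset X : closed (dirset X).
Proof.
move=> a Xa; have a1 : enorm a = 1.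
  by apply: closed_sphere; apply: closure_subset Xa => d [].
apply/dirsetP; split => // e e_gt0.
have e2_gt0 : 0 < e / 2 by rewrite divr_gt0.
have [d [/dirsetP[_ dP] da]] := Xa _ (near_enorm_lt a e2_gt0).
have [w [Xw w0 we wd]] := dP _ e2_gt0.
exists w; split => //; first lra.
have := enormD (dir w - d) (d - a); rewrite addrA subrK; lra.
Qed.

End directions.

Arguments dir {R n} x.

Section asymptotic_equivalence.
Variables (R : realType) (n : nat).
Implicit Types (u v : nat -> 'rV[R]_n) (a : 'rV[R]_n).

Definition asym_equiv u v :=
  forall e, 0 < e -> \forall i \near \oo, enorm (u i - v i) <= e * enorm (u i).

Lemma asym_equiv_cvg0 u v :
  u @ \oo --> (0 : 'rV[R]_n) -> asym_equiv u v -> v @ \oo --> (0 : 'rV[R]_n).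
Proof.
move=> /enorm_cvg0P u0 uv; apply/enorm_cvg0P => e e_gt0; near=> i.
have := enormD (v i - u i) (u i); rewrite subrK enorm_distC.
have : enorm (u i - v i) <= 1 * enorm (u i) by near: i; exact: uv.
have : enorm (u i) < e / 2 by near: i; apply: u0; rewrite divr_gt0.
lra.
Unshelve. all: by end_near.
Qed.

Lemma asym_equiv_neq0 u v : (\forall i \near \oo, u i != 0) -> asym_equiv u v ->
  \forall i \near \oo, v i != 0.
Proof.
move=> u_neq0 uv; near=> i; apply/eqP => vi0.
have : enorm (u i - v i) <= 2^-1 * enorm (u i) by near: i; apply: uv.
have : 0 < enorm (u i) by rewrite enorm_gt0; near: i.
rewrite vi0 subr0; lra.
Unshelve. all: by end_near.
Qed.

Lemma asym_equiv_dir u v a : (\forall i \near \oo, u i != 0) -> asym_equiv u v ->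
  dir \o u @ \oo --> a -> dir \o v @ \oo --> a.
Proof.
move=> u_neq0 uv /enorm_cvgP ua; apply/enorm_cvgP => e e_gt0; near=> i => /=.
have := enormD (dir (v i) - dir (u i)) (dir (u i) - a); rewrite addrA subrK.
have : enorm (dir (u i) - a) < e / 2 by near: i; apply: ua; rewrite divr_gt0.
have : enorm (u i - v i) <= e / 4 * enorm (u i).
  by near: i; apply: uv; rewrite divr_gt0.
have := ler_enorm_dir_dist (u i) (v i); rewrite enorm_distC.
have : 0 < enorm (u i) by rewrite enorm_gt0; near: i.
have := enorm_ge0 (dir (v i) - dir (u i)); nra.
Unshelve. all: by end_near.
Qed.

Lemma asym_equiv_ratio u v : (forall i, u i != 0) ->
  (fun i => enorm (u i - v i) / enorm (u i)) @ \oo --> 0 -> asym_equiv u v.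
Proof.
move=> u_neq0 /cvgr0Pnorm_lt uv e /uv; apply: filterS => i.
rewrite ger0_norm ?divr_ge0 ?enorm_ge0 // ltr_pdivrMr ?enorm_gt0 //.
exact: ltW.
Qed.

Lemma asym_equiv_scale_dir u a :
  dir \o u @ \oo --> a -> asym_equiv u (fun i => enorm (u i) *: a).
Proof.
move=> /enorm_cvgP ua e /ua; apply: filterS => i /= /ltW.
have -> : u i - enorm (u i) *: a = enorm (u i) *: (dir (u i) - a).
  by rewrite scalerBr enorm_scale_dir.
rewrite enormZ ger0_norm ?enorm_ge0 //.
by rewrite mulrC; apply: ler_wpM2r; exact: enorm_ge0.
Qed.

End asymptotic_equivalence.

Lemma LD_dir (R : realType) (n : nat) (A : set 'rV[R]_n) x :
  LD A x -> x != 0 -> dirset A (dir x).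
Proof.
move=> [t [a [t_ge0 [Aa ->]]]] ta_neq0.
have t_gt0 : 0 < t.
  by rewrite lt_def t_ge0 andbT; apply: contra_neq ta_neq0 => ->; rewrite scale0r.
by rewrite dirZ // dir_id //; case: Aa.
Qed.

Section bilipschitz_germ.
Variables (R : realType) (n : nat) (h : 'rV[R]_n -> 'rV[R]_n) (r K1 K2 : R).
Hypotheses (h0 : h 0 = 0) (r_gt0 : 0 < r) (K1_gt0 : 0 < K1) (K12 : K1 <= K2).
Hypothesis h_bilip : forall x y, enorm x < r -> enorm y < r ->
  K1 * enorm (x - y) <= enorm (h x - h y) /\ enorm (h x - h y) <= K2 * enorm (x - y).
Implicit Types (u v : nat -> 'rV[R]_n).

Lemma bilip_enorm x : enorm x < r -> K1 * enorm x <= enorm (h x) <= K2 * enorm x.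
Proof.
move=> xr; have r0 : enorm (0 : 'rV[R]_n) < r by rewrite enorm0.
by have [] := h_bilip xr r0; rewrite h0 !subr0 => -> ->.
Qed.

Lemma bilip_neq0 x : enorm x < r -> x != 0 -> h x != 0.
Proof.
move=> /bilip_enorm/andP[hx _]; rewrite -!enorm_gt0 => x_gt0.
by apply: lt_le_trans hx; rewrite mulr_gt0.
Qed.

Lemma bilip_cvg0 u : u @ \oo --> (0 : 'rV[R]_n) -> h \o u @ \oo --> (0 : 'rV[R]_n).
Proof.
have K2_gt0 : 0 < K2 by exact: lt_le_trans K12.
move=> /enorm_cvg0P u0; apply/enorm_cvg0P => e e_gt0; near=> i => /=.
have ur : enorm (u i) < r by near: i; exact: u0.
have /andP[_ hu] := bilip_enorm ur.
apply: le_lt_trans hu _; rewrite -ltr_pdivlMl //.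
by near: i; apply: u0; rewrite mulrC divr_gt0.
Unshelve. all: by end_near.
Qed.

Lemma bilip_asym_equiv u v :
    u @ \oo --> (0 : 'rV[R]_n) -> v @ \oo --> (0 : 'rV[R]_n) ->
  asym_equiv u v -> asym_equiv (h \o u) (h \o v).
Proof.
have K2_gt0 : 0 < K2 by exact: lt_le_trans K12.
move=> /enorm_cvg0P u0 /enorm_cvg0P v0 uv e e_gt0; near=> i => /=.
have ur : enorm (u i) < r by near: i; exact: u0.
have vr : enorm (v i) < r by near: i; exact: v0.
have [_ huv] := h_bilip ur vr.
have /andP[hu _] := bilip_enorm ur.
have uvi : enorm (u i - v i) <= e * K1 / K2 * enorm (u i).
  by near: i; apply: uv; rewrite !mulr_gt0 ?invr_gt0.
apply: (le_trans huv); apply: (le_trans (ler_wpM2l (ltW K2_gt0) uvi)).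
have -> : K2 * (e * K1 / K2 * enorm (u i)) = e * (K1 * enorm (u i)).
  by field; rewrite gt_eqF.
by rewrite ler_wpM2l // ltW.
Unshelve. all: by end_near.
Qed.

Variables (U : set 'rV[R]_n) (g : 'rV[R]_n -> 'rV[R]_n).
Hypotheses (ballU : forall x, enorm x < r -> U x) (ghK : forall x, U x -> g (h x) = x).
Hypothesis g_cont : {within h @` U, continuous g}.

Lemma cvg0_of_image_cvg0 u : (forall i, U (u i)) ->
  h \o u @ \oo --> (0 : 'rV[R]_n) -> u @ \oo --> (0 : 'rV[R]_n).
Proof.
move=> Uu hu0.
have U0 : U 0 by apply: ballU; rewrite enorm0.
have g0 : g 0 = 0 by rewrite -{1}h0 ghK.
have := (subspace_continuousP _ g).1 g_cont 0 (ex_intro2 _ _ 0 U0 h0).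
rewrite g0 => gc0.
have hu : h \o u @ \oo --> within (h @` U) (nbhs (0 : 'rV[R]_n)).
  move=> P hUP.
  have : \forall i \near \oo, (h @` U) (h (u i)) -> P (h (u i)) := hu0 _ hUP.
  by apply: filterS => i /= hUPi; apply: hUPi; exists (u i).
have -> : u = g \o (h \o u) by apply: funext => i; rewrite /= ghK.
exact: cvg_comp hu gc0.
Qed.

Lemma dirset_image_asym_equiv (Y : set 'rV[R]_n) a u v : enorm a = 1 ->
  (forall i, u i != 0) -> u @ \oo --> (0 : 'rV[R]_n) -> dir \o (h \o u) @ \oo --> a ->
  asym_equiv u v -> (forall i, Y (v i)) -> dirset (h @` (Y `&` U)) a.
Proof.
move=> a1 u_neq0 u0 hua uv Yv.
have v0 := asym_equiv_cvg0 u0 uv.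
have hu_neq0 : \forall i \near \oo, h (u i) != 0.
  by apply: filterS ((enorm_cvg0P _).1 u0 r r_gt0) => i /bilip_neq0; apply.
have huv := bilip_asym_equiv u0 v0 uv.
apply: (dirset_near a1 _ (bilip_cvg0 v0) (asym_equiv_dir hu_neq0 huv hua)).
near=> i; split.
  exists (v i) => //; split => //; apply: ballU.
  by near: i; exact: (enorm_cvg0P _).1 v0 r r_gt0.
by near: i; exact: asym_equiv_neq0 hu_neq0 huv.
Unshelve. all: by end_near.
Qed.

Lemma dirset_image_seq (X : set 'rV[R]_n) a : dirset (h @` (X `&` U)) a ->
  exists u d, [/\ forall i, X (u i) /\ u i != 0, u @ \oo --> (0 : 'rV[R]_n),
    dir \o (h \o u) @ \oo --> a, enorm d = 1 & dir \o u @ \oo --> d].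
Proof.
move=> [a1 [w [Xw [w0 wa]]]].
have /choice[u uP] : forall i, exists x, (X `&` U) x /\ h x = w i.
  by move=> i; have [[x Xx <-] _] := Xw i; exists x.
have hu : h \o u = w by apply: funext => i; case: (uP i).
have u_neq0 i : u i != 0.
  by apply: contra_neq (Xw i).2 => ui0; rewrite -hu /= ui0 h0.
have u0 : u @ \oo --> (0 : 'rV[R]_n).
  by apply: cvg0_of_image_cvg0 => [i|]; [case: (uP i) => -[] | rewrite hu].
have [d d1 [phi phi_oo ud]] :=
  compact_cvg_subseq (@compact_sphere R n) (fun i => enorm_dir (u_neq0 i)).
exists (u \o phi), d; split => //.
- by move=> i; have [[Xu _] _] := uP (phi i); split; last exact: u_neq0.
- exact: cvg_comp phi_oo u0.
- by rewrite -hu in wa; exact: cvg_comp phi_oo wa.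
Qed.

Lemma dirset_image_sub_LD (A : set 'rV[R]_n) :
  dirset (h @` (A `&` U)) `<=` dirset (h @` (LD A `&` U)).
Proof.
move=> a /[dup] [[a1 _]] /dirset_image_seq[u [d [Au u0 hua d1 ud]]].
have dA : dirset A d by split => //; exists u.
apply: (dirset_image_asym_equiv a1 _ u0 hua (asym_equiv_scale_dir ud)) => i.
  by case: (Au i).
by exists (enorm (u i)), d; rewrite enorm_ge0.
Qed.

Lemma dirset_image_LD_sub (A : set 'rV[R]_n) : SSP A ->
  dirset (h @` (LD A `&` U)) `<=` dirset (h @` (A `&` U)).
Proof.
move=> ssp a /[dup] [[a1 _]] /dirset_image_seq[u [d [LDu u0 hua d1 ud]]].
have u_neq0 i : u i != 0 by case: (LDu i).
have dA : dirset A d.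
  apply: (closed_cvg _ (@closed_dirset R n A) _ _ ud); apply: nearW => i.
  by have [LDui ui0] := LDu i; exact: LD_dir.
have [v [Av [uv _]]] := ssp u u_neq0 u0 (ex_intro _ d (conj dA ud)).
exact: dirset_image_asym_equiv a1 u_neq0 u0 hua (asym_equiv_ratio u_neq0 uv) Av.
Qed.

End bilipschitz_germ.

Theorem lemma5p6 (R : realType) (n : nat) (A : set 'rV[R]_n)
    (h : 'rV[R]_n -> 'rV[R]_n) (U : set 'rV[R]_n) :
  closure A 0 ->
  bilip_homeo_germ h U ->
  dirset (h @` (A `&` U)) `<=` dirset (h @` (LD A `&` U)) /\
  (SSP A -> dirset (h @` (A `&` U)) = dirset (h @` (LD A `&` U))).
Proof.
move=> _ [_ _ h0 _ [_ _ [g [ghK g_cont]] [r [K1 [K2 [r_gt0 K1_gt0 K12 ballU h_bilip]]]]]].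
have sub := dirset_image_sub_LD h0 r_gt0 K1_gt0 K12 h_bilip ballU ghK g_cont (A := A).
split=> // ssp; apply/seteqP; split=> //.
exact: (dirset_image_LD_sub h0 r_gt0 K1_gt0 K12 h_bilip ballU ghK g_cont ssp).
Qed.
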